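(* Fix $n\ge 2$, a dictator agent $t$, another agent $i\ne t$, and a constant $a\in(0,\frac12)$. For $b\in(0,1)$ and a profile $\mathbf{x}$ with $x_l=\min\mathbf{x}$, $x_r=\max\mathbf{x}$, $L=x_r-x_l$, define $$h_b(\mathbf{x})=\begin{cases} x_t+\max\left\{\frac{2(1-b)}{b}(x_t-x_l),\; x_r-x_t\right\} & \text{if } x_t\in[x_l,\,x_l+bL),\\[2pt] x_t-\max\left\{x_t-x_l,\; \frac{2b}{1-b}(x_r-x_t)\right\} & \text{if } x_t\in[x_l+bL,\,x_r].\end{cases}$$ Let $f$ be the mechanism that on $\mathbf{x}$ outputs $l_1=x_t$ and $l_2=h_a(\mathbf{x})$ if $x_i\le x_t$, and $l_2=h_{1-a}(\mathbf{x})$ if $x_i>x_t$. Then the approximation ratio of $f$ for social cost is $\frac{1-a}{a}(n-1)$, i.e. $SC(f,\mathbf{x})\le\frac{1-a}{a}(n-1)\,OPT(\mathbf{x})$ for every profile $\mathbf{x}\in\mathbb{R}^n$.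
   Context: Two-facility game on a line: agent $j$ has location $x_j\in\mathbb{R}$. For facility locations $\{l_1,l_2\}$, an agent at $y$ has cost $\min\{|l_1-y|,|l_2-y|\}$. $SC(f,\mathbf{x})$ is the sum over all agents of their costs under $f(\mathbf{x})$, and $OPT(\mathbf{x})=\min_{l_1,l_2\in\mathbb{R}}\sum_j\min\{|l_1-x_j|,|l_2-x_j|\}$. In the paper, ''the approximation ratio of $f$ is $\gamma$'' is defined to mean $SC(f,\mathbf{x})\le\gamma\,OPT(\mathbf{x})$ for all profiles $\mathbf{x}$. *)

From HB Require Import structures.
From mathcomp Require Import all_boot all_order all_algebra.
From mathcomp Require Import all_classical all_reals.
Set Implicit Arguments. Unset Strict Implicit. Unset Printing Implicit Defensive.
Import Order.TTheory GRing.Theory Num.Theory.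
Local Open Scope ring_scope.
Local Open Scope classical_set_scope.

Section TwoFacility.
Variables (R : realType) (n : nat).

(* x_l = min of the profile, x_r = max of the profile (n >= 1 assumed when used;
   the seed x t only matters for the empty profile). *)
Definition pmin (x : 'I_n -> R) (t : 'I_n) : R := \big[Num.min/x t]_(j < n) x j.
Definition pmax (x : 'I_n -> R) (t : 'I_n) : R := \big[Num.max/x t]_(j < n) x j.

Definition cost (x : 'I_n -> R) (l1 l2 : R) : R :=
  \sum_(j < n) Num.min `|l1 - x j| `|l2 - x j|.

Definition OPT (x : 'I_n -> R) : R :=
  inf (range (fun p : R * R => cost x p.1 p.2)).

Definition h (b : R) (t : 'I_n) (x : 'I_n -> R) : R :=
  let xl := pmin x t in
  let xr := pmax x t in
  let L := xr - xl in
  if x t < xl + b * L then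
    x t + Num.max ((2 * (1 - b) / b) * (x t - xl)) (xr - x t)
  else
    x t - Num.max (x t - xl) ((2 * b / (1 - b)) * (xr - x t)).

Definition mech (a : R) (t i : 'I_n) (x : 'I_n -> R) : R * R :=
  (x t, if x i <= x t then h a t x else h (1 - a) t x).

Definition SC (a : R) (t i : 'I_n) (x : 'I_n -> R) : R :=
  cost x (mech a t i x).1 (mech a t i x).2.

End TwoFacility.

(* The dictator t pays nothing, and every other agent j pays at most
   (1-a)/a * OPT; summing gives the bound.  OPT is at least the smaller gap of any three agents
   u <= v <= w, because two of them are served by the same facility.  If x_t
   lies in the left part of [x_l, x_r], the second facility is at or beyond x_r,
   at distance max(p (x_t - x_l), x_r - x_t) from x_t with p <= 2 (1-a)/a, and
   agent j is within (1-a)/a times a gap of one of the triples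
   (x_j, x_t, x_r), (x_t, x_j, x_r), (x_l, x_t, x_j).  The other case is the
   mirror image under x |-> -x. *)

From HB Require Import structures.
From mathcomp Require Import all_boot all_order all_algebra.
From mathcomp Require Import all_classical all_reals.
From mathcomp Require Import ring lra.
Import Order.TTheory GRing.Theory Num.Theory.
Set Implicit Arguments. Unset Strict Implicit.
Local Open Scope ring_scope.
Local Open Scope classical_set_scope.

Section MinGap.
Variable R : realType.

Definition min_gap_bounded (S : set R) (O : R) :=
  forall u v w, S u -> S v -> S w -> u <= v -> v <= w -> Num.min (v - u) (w - v) <= O.

Lemma min_gap_bounded_ge0 S O u : min_gap_bounded S O -> S u -> 0 <= O.
Proof.
by move=> gS Su; have := gS u u u Su Su Su (lexx u) (lexx u); rewrite subrr minxx.
Qed.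

Lemma min_gap_boundedN S O :
  min_gap_bounded S O -> min_gap_bounded [set - u | u in S] O.
Proof.
move=> gS _ _ _ [u Su <-] [v Sv <-] [w Sw <-]; rewrite !lerN2 => vu wv.
by rewrite minC !opprK ![- _ + _]addrC; apply: gS.
Qed.

Lemma min_gap_le_facility_dist (l1 l2 u v w : R) : u <= v -> v <= w ->
  Num.min (v - u) (w - v) <=
  Num.min `|l1 - u| `|l2 - u| + Num.min `|l1 - v| `|l2 - v|
    + Num.min `|l1 - w| `|l2 - w|.
Proof.
move=> uv vw.
have tri (l y z : R) : z - y <= `|l - y| + `|l - z|.
  by have := ler_norm (l - y); have := ler_norm (z - l); rewrite (distrC z l); lra.
have := tri l1 u v; have := tri l2 u v; have := tri l1 v w; have := tri l2 v w;
have := tri l1 u w; have := tri l2 u w.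
have := normr_ge0 (l1 - u); have := normr_ge0 (l2 - u); have := normr_ge0 (l1 - v);
have := normr_ge0 (l2 - v); have := normr_ge0 (l1 - w); have := normr_ge0 (l2 - w).
rewrite !minEle; do 4 case: ifP => ?; lra.
Qed.

End MinGap.

Section Odds.
Variable R : realType.

Lemma odds_le (a b : R) : 0 < a -> a <= b -> (1 - b) / b <= (1 - a) / a.
Proof.
move=> a0 ab; have b0 := lt_le_trans a0 ab.
rewrite !mulrBl !mul1r !divff ?gt_eqF // lerD2r lef_pV2 ?posrE //.
Qed.

Lemma le_mul_of_odds (a b u v : R) : 0 < a -> a <= b -> 0 <= v ->
  b * u <= (1 - b) * v -> u <= (1 - a) / a * v.
Proof.
move=> a0 ab v0 buv; apply: le_trans (ler_wpM2r v0 (odds_le a0 ab)).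
by rewrite mulrAC ler_pdivlMr ?(lt_le_trans a0) // mulrC.
Qed.

End Odds.

Section Profile.
Variables (R : realType) (n : nat) (x : 'I_n -> R).

Lemma pmin_le t j : pmin x t <= x j.
Proof. by rewrite /pmin (bigD1 j) //= ge_min lexx. Qed.

Lemma pmax_ge t j : x j <= pmax x t.
Proof. by rewrite /pmax (bigD1 j) //= le_max lexx. Qed.

Lemma pmin_in_range t : range x (pmin x t).
Proof.
rewrite /pmin; elim/big_ind: _ => [|_ _ [j1 _ <-] [j2 _ <-]|j _]; try by eexists.
by rewrite minEle; case: ifP; eexists.
Qed.

Lemma pmax_in_range t : range x (pmax x t).
Proof.
rewrite /pmax; elim/big_ind: _ => [|_ _ [j1 _ <-] [j2 _ <-]|j _]; try by eexists.
by rewrite maxEle; case: ifP; eexists.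
Qed.

Lemma cost_ge0 l1 l2 : 0 <= cost x l1 l2.
Proof. by apply: sumr_ge0 => j _; rewrite le_min !normr_ge0. Qed.

Lemma OPT_ge0 : 0 <= OPT x.
Proof.
apply: lb_le_inf => [|_ [[l1 l2] _ <-]]; last exact: cost_ge0.
by exists (cost x 0 0), (0, 0).
Qed.

Lemma OPT_min_gap_bounded : min_gap_bounded (range x) (OPT x).
Proof.
move=> _ _ _ [p _ <-] [q _ <-] [s _ <-].
rewrite le_eqVlt => /orP[/eqP-> _|pq]; first by rewrite subrr ge_min OPT_ge0.
rewrite le_eqVlt => /orP[/eqP<-|qs]; first by rewrite subrr ge_min OPT_ge0 orbT.
apply: lb_le_inf => [|_ [[l1 l2] _ <-]]; first by exists (cost x 0 0), (0, 0).
have neq j k : x j < x k -> k != j by move=> jk; apply: contraTneq jk => ->; rewrite ltxx.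
rewrite /cost (bigD1 p) //= (bigD1 q) ?neq //= (bigD1 s) /=; last first.
  by rewrite !neq // (lt_trans pq qs).
have := min_gap_le_facility_dist l1 l2 (ltW pq) (ltW qs).
have : 0 <= \sum_(j < n | (j != p) && (j != q) && (j != s))
              Num.min `|l1 - x j| `|l2 - x j|.
  by apply: sumr_ge0 => j _; rewrite le_min !normr_ge0.
lra.
Qed.

End Profile.

Section FarFacility.
Variables (R : realType) (O c : R).
Hypothesis c_ge1 : 1 <= c.

Lemma far_facility_right (S : set R) (p xl xt xj xr : R) : min_gap_bounded S O ->
  S xl -> S xt -> S xj -> S xr -> xl <= xt -> xt <= xr -> xl <= xj -> xj <= xr ->
  0 <= p <= 2 * c -> xt - xl <= c * (xr - xt) ->
  Num.min `|xt - xj| `|xt + Num.max (p * (xt - xl)) (xr - xt) - xj| <= c * O.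
Proof.
move=> gS Sl St Sj Sr xlt xtr xlj xjr /andP[p0 p2c] left_short.
have O0 := min_gap_bounded_ge0 gS St.
have O_cO : O <= c * O by rewrite ler_peMl.
rewrite ge_min !ler_norml.
have [jt|tj] := leP xj xt.
  have := gS _ _ _ Sj St Sr jt xtr; rewrite ge_min.
  have : xr - xt <= O -> c * (xr - xt) <= c * O by move=> ?; rewrite ler_wpM2l //; lra.
  lra.
rewrite maxEle; case: (leP (p * (xt - xl)) (xr - xt)) => pD.
  by have := gS _ _ _ St Sj Sr (ltW tj) xjr; rewrite ge_min; lra.
have := gS _ _ _ Sl St Sj xlt (ltW tj); rewrite ge_min.
have : xt - xl <= O -> p * (xt - xl) <= 2 * c * O by move=> ?; rewrite ler_pM //; lra.
lra.
Qed.

Lemma far_facility_left (S : set R) (q xl xt xj xr : R) : min_gap_bounded S O ->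
  S xl -> S xt -> S xj -> S xr -> xl <= xt -> xt <= xr -> xl <= xj -> xj <= xr ->
  0 <= q <= 2 * c -> xr - xt <= c * (xt - xl) ->
  Num.min `|xt - xj| `|xt - Num.max (xt - xl) (q * (xr - xt)) - xj| <= c * O.
Proof.
move=> gS Sl St Sj Sr xlt xtr xlj xjr q2c right_short.
have SN u : S u -> [set - v | v in S] (- u) by exists u.
have := far_facility_right (min_gap_boundedN gS) (SN _ Sr) (SN _ St) (SN _ Sj) (SN _ Sl).
have oppBN (u v : R) : - u - - v = v - u by ring.
rewrite !lerN2 !oppBN maxC => /(_ q xtr xlt xjr xlj q2c right_short).
set M := Num.max _ _.
have -> : - xt + M - - xj = - (xt - M - xj) by ring.
by rewrite normrN distrC.
Qed.

End FarFacility.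

Lemma h_facility_dist_le (R : realType) n (x : 'I_n -> R) (a b : R) (t j : 'I_n) :
  0 < a -> a <= b -> b <= 1 - a ->
  Num.min `|x t - x j| `|h b t x - x j| <= (1 - a) / a * OPT x.
Proof.
move=> a0 ab b1a.
have b0 : 0 < b := lt_le_trans a0 ab.
have c_ge1 : 1 <= (1 - a) / a by rewrite ler_pdivlMr // mul1r; lra.
have a1b : a <= 1 - b by lra.
have E : 1 - (1 - b) = b by ring.
have p_range b' : a <= b' -> b' <= 1 - a -> 0 <= 2 * (1 - b') / b' <= 2 * ((1 - a) / a).
  move=> ab' b'1a; have b'0 := lt_le_trans a0 ab'.
  rewrite -[_ / b']mulrA ler_pM2l ?odds_le // andbT mulr_ge0 ?divr_ge0 //; lra.
have gO := @OPT_min_gap_bounded _ _ x.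
have St : range x (x t) by exists t.
have Sj : range x (x j) by exists j.
have xlt := pmin_le x t t; have xtr := pmax_ge x t t.
have xlj := pmin_le x t j; have xjr := pmax_ge x t j.
rewrite /h /=; case: ifP => [short|/negbT long].
  apply: (far_facility_right c_ge1 gO (pmin_in_range x t) St Sj (pmax_in_range x t))
    => //.
    exact: p_range.
  by apply: (le_mul_of_odds a0 a1b); lra.
apply: (far_facility_left c_ge1 gO (pmin_in_range x t) St Sj (pmax_in_range x t)) => //.
  by rewrite -[in 2 * b]E; apply: p_range; lra.
by apply: (le_mul_of_odds a0 ab); lra.
Qed.

Theorem theorem8 (R : realType) (n : nat) (t i : 'I_n) (a : R)
  (hn : (2 <= n)%N) (hit : i != t) (ha0 : 0 < a) (ha1 : a < 1 / 2)
  (x : 'I_n -> R) :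
  SC a t i x <= (1 - a) / a * (n - 1)%:R * OPT x.
Proof.
have agent_cost j : Num.min `|x t - x j|
    `|(if x i <= x t then h a t x else h (1 - a) t x) - x j| <= (1 - a) / a * OPT x.
  by case: ifP => _; apply: h_facility_dist_le => //; lra.
rewrite /SC /cost /= (bigD1 t) //= subrr normr0 (minEle 0) normr_ge0 add0r.
apply: le_trans (ler_sum _ (fun j _ => agent_cost j)) _.
by rewrite sumr_const cardC1 card_ord subn1 [leRHS]mulrAC mulr_natr.
Qed.
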